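(* Let $K$ be an oriented Legendrian knot and $(X,\ast,u,d)$ a finite GL-rack. Let $\Delta=\alpha_1\cdots\alpha_n$ be the disjoint cycle decomposition of its diagonal map (fixed points counted as $1$-cycles), $A_i=\operatorname{supp}(\alpha_i)$, and let $B_1,\dots,B_m$ be the sets obtained by taking, for each cycle length occurring, the union of all $A_i$ of that length, so that $X=\bigsqcup_j B_j$ and each $(B_j,\ast|_{B_j},u|_{B_j},d|_{B_j})$ is a GL-rack. Then $\operatorname{Col}_X(K)=\sum_{j=1}^m\operatorname{Col}_{B_j}(K)$.
   Context: A rack is a set $X$ with a binary operation $\ast$ such that for every $y\in X$ the map $x\mapsto x\ast y$ is a bijection of $X$ (inverse written $x\mapsto x\ast^{-1}y$) and $(x\ast y)\ast z=(x\ast z)\ast(y\ast z)$ for all $x,y,z$. A GL-rack is a quadruple $(X,\ast,u,d)$ where $(X,\ast)$ is a rack and $u,d\colon X\to X$ are maps such that for all $x,y\in X$: $u(d(x\ast x))=d(u(x\ast x))=x$; $u(x\ast y)=u(x)\ast y$ and $d(x\ast y)=d(x)\ast y$; $x\ast u(y)=x\ast d(y)=x\ast y$. Homomorphisms of GL-racks preserve $\ast,u,d$. The diagonal map is $\Delta(x)=x\ast x$; for a finite GL-rack it is a bijection and $\Delta=(u\circ d)^{-1}$. Legendrian knots lie in $(\mathbb{R}^3,\xi_{\mathrm{std}})$, $\xi_{\mathrm{std}}=\mathrm{span}\{\partial_y,\partial_x+y\partial_z\}$, and are represented by oriented front diagrams (projections to the $(x,z)$-plane) with crossings and cusps. Given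 a finite GL-rack $Y$ and a front diagram $D$ of $K$, a coloring is an assignment of elements of $Y$ to the semi-arcs of $D$ (segments bounded by undercrossings or cusps) such that, following the orientation through a cusp, the color changes from $x$ to $u(x)$ if the cusp is traversed upward and to $d(x)$ if traversed downward; and at each crossing whose over-strand is colored $y$, if the under semi-arc on the right of the oriented over-strand is colored $x$, the one on its left is colored $x\ast y$. The number $\operatorname{Col}_Y(K)$ of colorings is a Legendrian isotopy invariant, equal to $|\operatorname{Hom}(\operatorname{GLR}(K),Y)|$ where $\operatorname{GLR}(K)$ is the fundamental GL-rack of $K$ (generated by the arcs of $D$ subject to these relations). *)

From mathcomp Require Import all_boot.
Set Implicit Arguments. Unset Strict Implicit. Unset Printing Implicit Defensive.

Record GLRack (X : finType) := {
  glop : X -> X -> X;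
  glu : X -> X;
  gld : X -> X;
  glop_bij : forall y : X, bijective (fun x => glop x y);
  glop_dist : forall x y z, glop (glop x y) z = glop (glop x z) (glop y z);
  glud_diag : forall x, glu (gld (glop x x)) = x;
  gldu_diag : forall x, gld (glu (glop x x)) = x;
  glu_op : forall x y, glu (glop x y) = glop (glu x) y;
  gld_op : forall x y, gld (glop x y) = glop (gld x) y;
  glop_u : forall x y, glop x (glu y) = glop x y;
  glop_d : forall x y, glop x (gld y) = glop x y
}.

Definition diag (X : finType) (R : GLRack X) (x : X) : X := glop R x x.

Definition cyclen (X : finType) (R : GLRack X) (x : X) : nat := order (diag R) x.

Definition Bset (X : finType) (R : GLRack X) (k : nat) : {set X} :=
  [set x | cyclen R x == k].

Definition cycle_lengths (X : finType) (R : GLRack X) : seq nat :=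
  undup [seq cyclen R x | x <- enum X].

(* Combinatorial data of an oriented front diagram of a knot with N semi-arcs.
   Semi-arcs are indexed by 'I_N in the order met when following the
   orientation; semi-arc (ordS i) follows semi-arc i.  The passage from
   semi-arc i to semi-arc (ordS i) is either a cusp traversed upward, a cusp
   traversed downward, or an undercrossing whose over-strand lies on semi-arc
   o; the boolean says whether semi-arc i is the under semi-arc on the right
   of the oriented over-strand (true) or on its left (false). *)
Inductive passage (N : nat) :=
  | CuspUp
  | CuspDown
  | Under of 'I_N & bool.

Definition front (N : nat) := 'I_N -> passage N.

Definition is_coloring (X : finType) (R : GLRack X) (N : nat) (D : front N)
    (f : 'I_N -> X) : bool :=
  [forall i : 'I_N,
    match D i with
    | CuspUp => f (ordS i) == glu R (f i)
    | CuspDown => f (ordS i) == gld R (f i)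
    | Under o true => f (ordS i) == glop R (f i) (f o)
    | Under o false => f i == glop R (f (ordS i)) (f o)
    end].

(* Number of colorings of D by the sub-GL-rack B of X (operations restricted):
   colorings of D all of whose colors lie in B. *)
Definition Col_in (X : finType) (R : GLRack X) (B : {set X}) (N : nat)
    (D : front N) : nat :=
  #|[set f : {ffun 'I_N -> X} | is_coloring R D f && [forall i, f i \in B]]|.

Definition Col (X : finType) (R : GLRack X) (N : nat) (D : front N) : nat :=
  Col_in R [set: X] D.

From mathcomp Require Import all_boot.
Set Implicit Arguments. Unset Strict Implicit. Unset Printing Implicit Defensive.

(* The diagonal map commutes with u, d and every right translation x |-> x * y,
   and these maps are injective, so they all preserve the length of the
   Delta-cycle through a point.  Across each cusp or crossing of a diagram the
   color changes by one of these maps (or the inverse of a right translation),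
   so all colors of a coloring of a knot lie in a single B_k; the colorings by
   X are thus partitioned according to that k. *)

Lemma iter_commute (T : Type) (f g : T -> T) :
  {morph g : x / f x} -> forall n x, iter n f (g x) = g (iter n f x).
Proof. by move=> fg; elim=> //= n IHn x; rewrite IHn -fg. Qed.

Lemma order_commute_inj (T : finType) (f g : T -> T) :
  injective g -> {morph g : x / f x} -> forall x, order f (g x) = order f x.
Proof.
move=> inj_g fg x; rewrite /order -(card_imset (mem (fconnect f x)) inj_g).
apply: eq_card => y; apply/idP/imsetP => [/iter_findex <- | [z /iter_findex <- ->]].
  rewrite iter_commute //; exists (iter (findex f (g x) y) f x) => //.
  exact: fconnect_iter.
by rewrite -iter_commute //; exact: fconnect_iter.
Qed.

Lemma fconnect_ordS0 n (i : 'I_n.+1) : fconnect (@ordS n.+1) ord0 i.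
Proof.
suff iter_ordS0 k : k < n.+1 -> iter k (@ordS n.+1) ord0 = inord k.
  by rewrite -(inord_val i) -iter_ordS0 //; exact: fconnect_iter.
elim: k => [|k IHk] ltkn; apply: val_inj; first by rewrite /= inordK.
by rewrite iterS IHk ?(ltnW ltkn) //= !inordK // ?modn_small // ltnW.
Qed.

Lemma card_partition_seq (T : finType) (I : eqType) (A : {set T}) (h : T -> I)
    (s : seq I) :
  uniq s -> {in A, forall x, h x \in s} ->
  #|A| = \sum_(i <- s) #|[set x in A | h x == i]|.
Proof.
move=> uniq_s hAs; rewrite -sum1_card.
transitivity (\sum_(x in A) \sum_(i <- s | i == h x) 1).
  by apply: eq_bigr => x Ax; rewrite sum1_count count_uniq_mem // hAs.
rewrite (exchange_big_dep xpredT) //=; apply: eq_bigr => i _.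
by rewrite -sum1dep_card; apply: eq_bigl => x; rewrite eq_sym.
Qed.

Section DiagonalCycles.

Variables (X : finType) (R : GLRack X).

Lemma diag_bij : bijective (diag R).
Proof. exact/injF_bij/(@can_inj _ _ _ (glu R \o gld R))/glud_diag. Qed.

Lemma glu_inj : injective (glu R).
Proof.
have du_bij : bijective (gld R \o glu R).
  exact: (bij_can_bij diag_bij (f' := gld R \o glu R) (gldu_diag R)).
exact: inj_compr (bij_inj du_bij).
Qed.

Lemma gld_inj : injective (gld R).
Proof.
have ud_bij : bijective (glu R \o gld R).
  exact: (bij_can_bij diag_bij (f' := glu R \o gld R) (glud_diag R)).
exact: inj_compr (bij_inj ud_bij).
Qed.

Lemma cyclen_glu x : cyclen R (glu R x) = cyclen R x.
Proof. by apply: order_commute_inj glu_inj _ x => y; rewrite /diag glu_op glop_u. Qed.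

Lemma cyclen_gld x : cyclen R (gld R x) = cyclen R x.
Proof. by apply: order_commute_inj gld_inj _ x => y; rewrite /diag gld_op glop_d. Qed.

Lemma cyclen_glop x y : cyclen R (glop R x y) = cyclen R x.
Proof.
apply: order_commute_inj (bij_inj (glop_bij R y)) _ x => z.
by rewrite /diag glop_dist.
Qed.

Lemma cyclen_cycle_lengths x : cyclen R x \in cycle_lengths R.
Proof. by rewrite mem_undup map_f ?mem_enum. Qed.

Definition colorings N (D : front N) : {set {ffun 'I_N -> X}} :=
  [set f : {ffun 'I_N -> X} | is_coloring R D f].

Lemma cyclen_coloring_ordS N (D : front N) (f : {ffun 'I_N -> X}) i :
  f \in colorings D -> cyclen R (f (ordS i)) = cyclen R (f i).
Proof.
rewrite inE => /forallP /(_ i); case: (D i) => [| |o []] /eqP ->.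
- exact: cyclen_glu.
- exact: cyclen_gld.
- exact: cyclen_glop.
- by rewrite cyclen_glop.
Qed.

Lemma cyclen_coloring_const n (D : front n.+1) (f : {ffun 'I_n.+1 -> X}) i :
  f \in colorings D -> cyclen R (f i) = cyclen R (f ord0).
Proof.
move=> colf; symmetry.
apply: (fconnect_invariant (k := cyclen R \o f)) (fconnect_ordS0 i).
by move=> j; rewrite /= (cyclen_coloring_ordS _ colf) eqxx.
Qed.

Lemma Col_colorings N (D : front N) : Col R D = #|colorings D|.
Proof.
apply: eq_card => f; rewrite !inE andb_idr // => _.
by apply/forallP => i; rewrite inE.
Qed.

Lemma Col_in_Bset n (D : front n.+1) k :
  Col_in R (Bset R k) D = #|[set f in colorings D | cyclen R (f ord0) == k]|.
Proof.
apply: eq_card => f; rewrite !inE; case colf: is_coloring => //=.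
have {}colf : f \in colorings D by rewrite inE.
apply/forallP/idP => [/(_ ord0) | /eqP <- i]; first by rewrite inE.
by rewrite inE (cyclen_coloring_const _ colf).
Qed.

End DiagonalCycles.

Theorem theorem3p10 (X : finType) (R : GLRack X) (N : nat) (D : front N) :
  0 < N ->
  Col R D = \sum_(k <- cycle_lengths R) Col_in R (Bset R k) D.
Proof.
case: N D => // n D _.
pose k_of (f : {ffun 'I_n.+1 -> X}) := cyclen R (f ord0).
rewrite Col_colorings (@card_partition_seq _ _ _ k_of (cycle_lengths R)).
- by apply: eq_bigr => k _; rewrite Col_in_Bset.
- exact: undup_uniq.
- by move=> f _; exact: cyclen_cycle_lengths.
Qed.
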